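(* Let $C\subseteq\mathbb{R}^2$ be a strictly convex closed differentiable curve, and let $h\colon C\to C$ be the map sending $p\in C$ to the unique point of intersection of the normal line to $C$ at $p$ with $C\setminus\{p\}$. Then $h$ has degree one; in particular $h$ is surjective.
   Context: A curve $C\subseteq\mathbb{R}^2$ is strictly convex if $C=\partial Y$ for some $Y\subseteq\mathbb{R}^2$ such that $ty+(1-t)y'$ lies in the interior of $Y$ for all $y,y'\in Y$, $t\in(0,1)$. The normal line at $p$ is the line through $p$ perpendicular to the tangent line of $C$ at $p$; the map $h$ is continuous. *)

From Stdlib Require Import Reals.
Open Scope R_scope.

Definition pt : Type := (R * R)%type.

Definition padd (p q : pt) : pt := (fst p + fst q, snd p + snd q).
Definition pscale (t : R) (p : pt) : pt := (t * fst p, t * snd p).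

Definition dist2 (p q : pt) : R :=
  sqrt ((fst p - fst q) ^ 2 + (snd p - snd q) ^ 2).

Definition interior2 (Y : pt -> Prop) (p : pt) : Prop :=
  exists e, 0 < e /\ forall q, dist2 q p < e -> Y q.

Definition boundary2 (Y : pt -> Prop) (p : pt) : Prop :=
  forall e, 0 < e ->
    (exists q, Y q /\ dist2 q p < e) /\ (exists q, ~ Y q /\ dist2 q p < e).

Definition strictly_convex_set (Y : pt -> Prop) : Prop :=
  forall y y' t, Y y -> Y y' -> y <> y' -> 0 < t < 1 ->
    interior2 Y (padd (pscale t y) (pscale (1 - t) y')).

Definition strictly_convex_curve (C : pt -> Prop) : Prop :=
  exists Y : pt -> Prop, strictly_convex_set Y /\ (forall p, C p <-> boundary2 Y p).

(* (gx, gy) : R -> R^2 is a regular differentiable parametrization of the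
   closed (simple) curve C: 1-periodic, injective on one period, onto C,
   differentiable with nowhere-vanishing derivative. *)
Definition closed_diff_param (C : pt -> Prop) (gx gy : R -> R) : Prop :=
  (forall t, gx (t + 1) = gx t /\ gy (t + 1) = gy t) /\
  (forall s t, 0 <= s < 1 -> 0 <= t < 1 -> (gx s, gy s) = (gx t, gy t) -> s = t) /\
  (forall p, C p <-> exists t, p = (gx t, gy t)) /\
  (forall t, exists dx dy, derivable_pt_lim gx t dx /\ derivable_pt_lim gy t dy
                           /\ (dx, dy) <> (0, 0)).

Definition on_normal_line (gx gy : R -> R) (t : R) (q : pt) : Prop :=
  forall dx dy, derivable_pt_lim gx t dx -> derivable_pt_lim gy t dy ->
    (fst q - gx t) * dx + (snd q - gy t) * dy = 0.

Definition continuous_on_curve (C : pt -> Prop) (h : pt -> pt) : Prop :=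
  forall p, C p -> forall e, 0 < e -> exists d, 0 < d /\
    forall q, C q -> dist2 q p < d -> dist2 (h q) (h p) < e.

(* h : C -> C has degree one (w.r.t. the parametrization R/Z ~ C, t |-> gamma t):
   the induced circle map admits a continuous lift F : R -> R with
   h (gamma t) = gamma (F t) and F (t + 1) = F t + 1. *)
Definition degree_one (gx gy : R -> R) (h : pt -> pt) : Prop :=
  exists F : R -> R,
    (forall t, continuity_pt F t) /\
    (forall t, h (gx t, gy t) = (gx (F t), gy (F t))) /\
    (forall t, F (t + 1) = F t + 1).

Definition surjective_on (C : pt -> Prop) (h : pt -> pt) : Prop :=
  forall q, C q -> exists p, C p /\ h p = q.

From Stdlib Require Import Reals Lra Lia ZArith ClassicalEpsilon.
Open Scope R_scope.

(* Write h (γ t) = γ (t + g t) with 0 < g t < 1, where γ = (gx, gy). Since γ is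
   injective on a period and h has no fixed point, g is well defined and 1-periodic.
   By compactness, γ (t0 + s) stays uniformly away from h (γ t0) when s is away from
   g t0, which together with the continuity of h forces g to be continuous. Hence
   F t := t + g t is a continuous lift of h with F (t + 1) = F t + 1, and it is onto
   by the intermediate value theorem because t < F t < t + 1. Strict convexity and the
   normal-line condition are needed only to make h well defined and fixed-point free. *)

(* The taxicab distance is equivalent to [dist2], and its triangle inequality is
   coordinatewise. *)
Definition dist1 (p q : pt) : R := Rabs (fst p - fst q) + Rabs (snd p - snd q).

Lemma dist2_le_dist1 p q : dist2 p q <= dist1 p q.
Proof.
  unfold dist2, dist1.
  set (a := fst p - fst q); set (b := snd p - snd q).
  pose proof (Rabs_pos a); pose proof (Rabs_pos b).
  rewrite <- (sqrt_Rsqr (Rabs a + Rabs b)) by lra.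
  apply sqrt_le_1_alt; unfold Rsqr.
  rewrite <- (pow2_abs a), <- (pow2_abs b); nra.
Qed.

Lemma dist1_le_2dist2 p q : dist1 p q <= 2 * dist2 p q.
Proof.
  unfold dist2, dist1.
  set (a := fst p - fst q); set (b := snd p - snd q).
  assert (Ha : Rabs a <= sqrt (a ^ 2 + b ^ 2)).
  { rewrite <- sqrt_Rsqr_abs; apply sqrt_le_1_alt; unfold Rsqr; nra. }
  assert (Hb : Rabs b <= sqrt (a ^ 2 + b ^ 2)).
  { rewrite <- sqrt_Rsqr_abs; apply sqrt_le_1_alt; unfold Rsqr; nra. }
  lra.
Qed.

Lemma dist1_triangle p q r : dist1 p r <= dist1 p q + dist1 q r.
Proof.
  unfold dist1.
  pose proof (Rabs_triang (fst p - fst q) (fst q - fst r)).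
  pose proof (Rabs_triang (snd p - snd q) (snd q - snd r)).
  replace (fst p - fst r) with ((fst p - fst q) + (fst q - fst r)) by ring.
  replace (snd p - snd r) with ((snd p - snd q) + (snd q - snd r)) by ring.
  lra.
Qed.

Lemma dist1_pos p q : p <> q -> 0 < dist1 p q.
Proof.
  destruct p as [a b], q as [c d]; unfold dist1; simpl; intros Hpq.
  pose proof (Rabs_pos (a - c)); pose proof (Rabs_pos (b - d)).
  destruct (Req_dec a c) as [<- | Hac].
  - assert (b <> d) by (intros <-; auto).
    pose proof (Rabs_pos_lt (b - d) ltac:(lra)); lra.
  - pose proof (Rabs_pos_lt (a - c) ltac:(lra)); lra.
Qed.

Definition dist1_continuous (P : R -> pt) : Prop :=
  forall t0 eps, 0 < eps -> exists d, 0 < d /\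
    forall t, Rabs (t - t0) < d -> dist1 (P t) (P t0) < eps.

Lemma dist1_continuous_comp_curve (C : pt -> Prop) (h : pt -> pt) (P : R -> pt) :
  (forall t, C (P t)) -> continuous_on_curve C h -> dist1_continuous P ->
  dist1_continuous (fun t => h (P t)).
Proof.
  intros HPC Hh HP t0 eps Heps.
  destruct (Hh _ (HPC t0) (eps / 2)) as [d1 [Hd1 Hhd1]]; [lra |].
  destruct (HP t0 d1 Hd1) as [d [Hd HPd]].
  exists d; split; [exact Hd |]; intros t Ht.
  pose proof (dist1_le_2dist2 (h (P t)) (h (P t0))).
  pose proof (dist2_le_dist1 (P t) (P t0)).
  pose proof (Hhd1 (P t) (HPC t) ltac:(pose proof (HPd t Ht); lra)).
  lra.
Qed.

Lemma continuity_pos_min (f : R -> R) a b : continuity f ->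
  (forall s, a <= s <= b -> 0 < f s) ->
  exists m, 0 < m /\ forall s, a <= s <= b -> m <= f s.
Proof.
  intros Hf Hpos; destruct (Rle_lt_dec a b) as [Hab | Hba].
  - destruct (continuity_ab_min f a b Hab (fun c _ => Hf c)) as [s0 [Hmin Hs0]].
    exists (f s0); split; auto.
  - exists 1; split; [lra |]; intros; lra.
Qed.

Lemma continuity_pos_min_away (f : R -> R) a b c e : continuity f -> 0 < e ->
  (forall s, a <= s <= b -> s <> c -> 0 < f s) ->
  exists m, 0 < m /\ forall s, a <= s <= b -> e <= Rabs (s - c) -> m <= f s.
Proof.
  intros Hf He Hpos.
  destruct (continuity_pos_min f a (Rmin b (c - e)) Hf) as [m1 [Hm1 Hleft]].
  { intros s Hs; pose proof (Rmin_l b (c - e)); pose proof (Rmin_r b (c - e)).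
    apply Hpos; [lra | intros ->; lra]. }
  destruct (continuity_pos_min f (Rmax a (c + e)) b Hf) as [m2 [Hm2 Hright]].
  { intros s Hs; pose proof (Rmax_l a (c + e)); pose proof (Rmax_r a (c + e)).
    apply Hpos; [lra | intros ->; lra]. }
  exists (Rmin m1 m2); split; [apply Rmin_pos; assumption |].
  intros s Hs Hsc; pose proof (Rmin_l m1 m2); pose proof (Rmin_r m1 m2).
  destruct (Rle_lt_dec s c).
  - rewrite Rabs_left1 in Hsc by lra.
    pose proof (Hleft s ltac:(split; [lra | apply Rmin_glb; lra])); lra.
  - rewrite Rabs_pos_eq in Hsc by lra.
    pose proof (Hright s ltac:(split; [apply Rmax_lub; lra | lra])); lra.
Qed.

Lemma continuous_lift_surjective (F : R -> R) : continuity F ->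
  (forall t, t < F t < t + 1) -> forall u, exists z, F z = u.
Proof.
  intros HF HFt u.
  destruct (IVT (fun t => F t - u) (u - 1) u) as [z [_ Hz]].
  - apply continuity_minus; [exact HF |]; apply continuity_const; intros ? ?; reflexivity.
  - lra.
  - pose proof (HFt (u - 1)); lra.
  - pose proof (HFt u); lra.
  - exists z; lra.
Qed.

Section ClosedPath.

Variables gx gy : R -> R.

Local Notation gam t := (gx t, gy t).

Hypothesis gx_continuous : continuity gx.
Hypothesis gy_continuous : continuity gy.
Hypothesis gam_periodic : forall t, gam (t + 1) = gam t.
Hypothesis gam_inj_period : forall s t, 0 <= s < 1 -> 0 <= t < 1 -> gam s = gam t -> s = t.

Lemma gam_uniformly_continuous a b eps : 0 < eps -> exists d, 0 < d /\
  forall x y, a <= x <= b -> a <= y <= b -> Rabs (x - y) < d -> dist1 (gam x) (gam y) < eps.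
Proof.
  intros Heps.
  assert (Heps2 : 0 < eps / 2) by lra.
  destruct (Heine gx _ (compact_P3 a b) (fun x _ => gx_continuous x) (mkposreal _ Heps2))
    as [dx Hdx].
  destruct (Heine gy _ (compact_P3 a b) (fun x _ => gy_continuous x) (mkposreal _ Heps2))
    as [dy Hdy].
  exists (Rmin dx dy); split; [apply Rmin_pos; apply cond_pos |].
  intros x y Hx Hy Hxy; pose proof (Rmin_l dx dy); pose proof (Rmin_r dx dy).
  unfold dist1; simpl.
  pose proof (Hdx x y Hx Hy ltac:(lra)); pose proof (Hdy x y Hx Hy ltac:(lra)); simpl in *.
  lra.
Qed.

Lemma gam_dist1_continuous : dist1_continuous (fun t => gam t).
Proof.
  intros t0 eps Heps.
  destruct (gam_uniformly_continuous (t0 - 1) (t0 + 1) eps Heps) as [d [Hd Hunif]].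
  exists (Rmin 1 d); split; [apply Rmin_pos; lra |]; intros t Ht.
  pose proof (Rmin_l 1 d); pose proof (Rmin_r 1 d).
  destruct (Rabs_def2 (t - t0) 1 ltac:(lra)).
  apply Hunif; lra.
Qed.

Lemma continuity_dist1_gam q : continuity (fun t => dist1 (gam t) q).
Proof.
  assert (Hcoord : forall f c, continuity f -> continuity (fun t => Rabs (f t - c))).
  { intros f c Hf.
    apply (continuity_comp (fun t => f t - c) Rabs); [| exact Rcontinuity_abs].
    apply continuity_minus; [exact Hf |]; apply continuity_const; intros ? ?; reflexivity. }
  apply (continuity_plus (fun t => Rabs (gx t - fst q)) (fun t => Rabs (gy t - snd q)));
    apply Hcoord; assumption.
Qed.

Lemma gam_periodic_Z k x : gam (x + IZR k) = gam x.
Proof.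
  revert x; induction k as [| k IHk | k IHk] using Z.peano_ind; intros x.
  - now rewrite Rplus_0_r.
  - rewrite succ_IZR; replace (x + (IZR k + 1)) with (x + IZR k + 1) by ring.
    rewrite gam_periodic; apply IHk.
  - rewrite <- Z.sub_1_r, minus_IZR, <- gam_periodic.
    replace (x + (IZR k - 1) + 1) with (x + IZR k) by ring; apply IHk.
Qed.

Lemma gam_eq_diff_int u v : gam u = gam v -> exists k, v - u = IZR k.
Proof.
  intros Huv.
  pose proof (base_Int_part u); pose proof (base_Int_part v).
  set (a := Int_part u) in *; set (b := Int_part v) in *.
  assert (Hred : forall x k, gam (x - IZR k) = gam x).
  { intros x k; rewrite <- (gam_periodic_Z k (x - IZR k)); f_equal; f_equal; ring. }
  assert (u - IZR a = v - IZR b) by (apply gam_inj_period; [lra | lra | now rewrite !Hred]).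
  exists (b - a)%Z; rewrite minus_IZR; lra.
Qed.

Lemma gam_shift_inj t s1 s2 : Rabs (s1 - s2) < 1 -> gam (t + s1) = gam (t + s2) -> s1 = s2.
Proof.
  intros Hs Heq; destruct (gam_eq_diff_int _ _ Heq) as [k Hk].
  destruct (Rabs_def2 _ _ Hs).
  assert (k = 0%Z) as ->.
  { assert (Hlt : (-1 < k < 1)%Z) by (split; apply lt_IZR; simpl; lra); lia. }
  simpl in Hk; lra.
Qed.

Lemma gam_offset_exists t u : gam u <> gam t -> exists s, 0 < s < 1 /\ gam (t + s) = gam u.
Proof.
  intros Hne; pose proof (base_Int_part (u - t)).
  set (k := Int_part (u - t)) in *.
  assert (Hs : gam (t + (u - t - IZR k)) = gam u).
  { rewrite <- (gam_periodic_Z k); f_equal; f_equal; ring. }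
  exists (u - t - IZR k); split; [| exact Hs].
  destruct (Req_dec (u - t - IZR k) 0) as [H0 | H0]; [| lra].
  rewrite H0, Rplus_0_r in Hs; congruence.
Qed.

Lemma gam_dist1_lower_bound t0 g0 e : 0 < g0 < 1 -> 0 < e -> exists m, 0 < m /\
  forall s, 0 <= s <= 1 -> e <= Rabs (s - g0) -> m <= dist1 (gam (t0 + s)) (gam (t0 + g0)).
Proof.
  intros Hg0 He.
  destruct (continuity_pos_min_away (fun t => dist1 (gam t) (gam (t0 + g0)))
              t0 (t0 + 1) (t0 + g0) e (continuity_dist1_gam _) He) as [m [Hm Hlow]].
  - intros t Ht Hne; apply dist1_pos; intros Heq; apply Hne.
    assert (t - t0 = g0).
    { apply (gam_shift_inj t0); [apply Rabs_def1; lra |].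
      replace (t0 + (t - t0)) with t by ring; exact Heq. }
    lra.
  - exists m; split; [exact Hm |]; intros s Hs Hsg.
    apply Hlow; [lra |].
    replace (t0 + s - (t0 + g0)) with (s - g0) by ring; exact Hsg.
Qed.

Lemma offset_continuous (P : R -> pt) (g : R -> R) : dist1_continuous P ->
  (forall t, 0 < g t < 1 /\ gam (t + g t) = P t) -> continuity g.
Proof.
  intros HP Hg t0 e He.
  destruct (Hg t0) as [Hg0 Eg0].
  destruct (gam_dist1_lower_bound t0 (g t0) e Hg0 He) as [m [Hm Hlow]].
  destruct (gam_uniformly_continuous (t0 - 1) (t0 + 2) (m / 2)) as [d1 [Hd1 Hunif]]; [lra |].
  destruct (HP t0 (m / 2)) as [d2 [Hd2 HPd]]; [lra |].
  exists (Rmin 1 (Rmin d1 d2)); split; [repeat apply Rmin_pos; lra |].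
  intros x [_ Hx]; change (Rabs (x - t0) < Rmin 1 (Rmin d1 d2)) in Hx.
  change (Rabs (g x - g t0) < e).
  pose proof (Rmin_l 1 (Rmin d1 d2)); pose proof (Rmin_r 1 (Rmin d1 d2)).
  pose proof (Rmin_l d1 d2); pose proof (Rmin_r d1 d2).
  destruct (Rabs_def2 (x - t0) 1 ltac:(lra)).
  destruct (Hg x) as [Hgx Egx].
  apply Rnot_le_lt; intros Hfar.
  pose proof (Hlow (g x) ltac:(lra) Hfar) as Hm_le.
  assert (Hnear : dist1 (gam (t0 + g x)) (gam (x + g x)) < m / 2).
  { apply Hunif; [lra | lra |].
    replace (t0 + g x - (x + g x)) with (- (x - t0)) by ring; rewrite Rabs_Ropp; lra. }
  pose proof (HPd x ltac:(lra)) as HPx.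
  pose proof (dist1_triangle (gam (t0 + g x)) (gam (x + g x)) (gam (t0 + g t0))).
  rewrite Egx, Eg0 in *; lra.
Qed.

Lemma fixed_point_free_lift (P : R -> pt) : dist1_continuous P ->
  (forall t, P (t + 1) = P t) -> (forall t, exists u, P t = gam u) -> (forall t, P t <> gam t) ->
  exists F, continuity F /\ (forall t, P t = gam (F t)) /\
    (forall t, F (t + 1) = F t + 1) /\ (forall t, t < F t < t + 1).
Proof.
  intros HP HPper HPgam HPfree.
  assert (Hoffset : forall t, exists s, 0 < s < 1 /\ gam (t + s) = P t).
  { intros t; destruct (HPgam t) as [u Hu]; rewrite Hu.
    apply gam_offset_exists; rewrite <- Hu; apply HPfree. }
  assert (Hg : exists g : R -> R, forall t, 0 < g t < 1 /\ gam (t + g t) = P t).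
  { exists (fun t => proj1_sig (constructive_indefinite_description _ (Hoffset t))).
    intros t; exact (proj2_sig (constructive_indefinite_description _ (Hoffset t))). }
  destruct Hg as [g Hg].
  assert (Hg_per : forall t, g (t + 1) = g t).
  { intros t; destruct (Hg t) as [Hgt Egt]; destruct (Hg (t + 1)) as [Hgt1 Egt1].
    apply (gam_shift_inj t); [apply Rabs_def1; lra |].
    rewrite Egt, <- HPper, <- Egt1, <- gam_periodic.
    f_equal; f_equal; ring. }
  exists (fun t => t + g t); repeat split.
  - apply (continuity_plus id g); [exact (derivable_continuous _ derivable_id) |].
    exact (offset_continuous P g HP Hg).
  - intros t; symmetry; apply Hg.
  - intros t; rewrite Hg_per; ring.
  - pose proof (Hg t); lra.
  - pose proof (Hg t); lra.
Qed.

End ClosedPath.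

Theorem lemma6p3 (C : pt -> Prop) (gx gy : R -> R) (h : pt -> pt) :
  strictly_convex_curve C ->
  closed_diff_param C gx gy ->
  (forall t, C (h (gx t, gy t)) /\ h (gx t, gy t) <> (gx t, gy t) /\
             on_normal_line gx gy t (h (gx t, gy t))) ->
  continuous_on_curve C h ->
  degree_one gx gy h /\ surjective_on C h.
Proof.
  intros _ [Hper [Hinj [HC Hderiv]]] Hh Hcont.
  assert (Hgx : continuity gx /\ continuity gy).
  { split; intros t; destruct (Hderiv t) as (dx & dy & Hdx & Hdy & _).
    - exact (derivable_continuous_pt _ _ (exist _ dx Hdx)).
    - exact (derivable_continuous_pt _ _ (exist _ dy Hdy)). }
  destruct Hgx as [Hgx Hgy].
  assert (Hgam_per : forall t, (gx (t + 1), gy (t + 1)) = (gx t, gy t)).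
  { intros t; destruct (Hper t) as [-> ->]; reflexivity. }
  assert (Hon_curve : forall t, C (gx t, gy t)) by (intros t; apply HC; exists t; reflexivity).
  assert (HP : dist1_continuous (fun t => h (gx t, gy t))).
  { apply (dist1_continuous_comp_curve C); [exact Hon_curve | exact Hcont |].
    exact (gam_dist1_continuous gx gy Hgx Hgy). }
  destruct (fixed_point_free_lift gx gy Hgx Hgy Hgam_per Hinj (fun t => h (gx t, gy t)) HP)
    as (F & HFc & HF & HF1 & HFbound).
  - intros t; rewrite Hgam_per; reflexivity.
  - intros t; apply HC, Hh.
  - intros t; apply Hh.
  - split; [exists F; auto |].
    intros q Hq; destruct (proj1 (HC q) Hq) as [u ->].
    destruct (continuous_lift_surjective F HFc HFbound u) as [z Hz].
    exists (gx z, gy z); split; [apply Hon_curve | now rewrite HF, Hz].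
Qed.
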